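(* Let $\mathcal X_1=(\Omega_1,S_1)$, $\mathcal X_2=(\Omega_2,S_2)$ be coherent configurations, $\mathcal X=\mathcal X_1\wr\mathcal X_2$ on $\Omega=\Omega_1\times\Omega_2$, and $\Pi\subseteq 2^\Omega$. Suppose that (1) for every $a\in\Omega_2$ the family $\Pi_a=\{\Gamma\cap\Omega_a:\Gamma\in\Pi\}$ is a generalized base of $\mathcal X_{\Omega_a}$, and (2) the family $\{\pi(\Gamma):\Gamma\in\Pi\}$ is a generalized base of $\mathcal X_2$, where $\pi:\Omega\to\Omega_2$ is the projection. Then $\Pi$ is a generalized base of $\mathcal X$.
   Context: A coherent configuration on a finite set $\Omega$ is $\mathcal X=(\Omega,S)$ with $S$ a partition of $\Omega\times\Omega$ such that $1_\Omega$ is a union of elements of $S$, $s^*=\{(\beta,\alpha):(\alpha,\beta)\in s\}\in S$ for $s\in S$, and for $r,s,t\in S$ the number $|\{\gamma:(\alpha,\gamma)\in r,(\gamma,\beta)\in s\}|$ is independent of $(\alpha,\beta)\in t$. Relations are unions of elements of $S$; fibers are sets $\Gamma$ with $1_\Gamma\in S$. $\mathcal X\le\mathcal X'$ if every relation of $\mathcal X$ is a relation of $\mathcal X'$ (fission). Complete: all basic relations singletons. For $\Pi\subseteq2^\Omega$, the $\Pi$-fission is the smallest fission in which each member of $\Pi$ is a union of fibers; $\Pi$ is a generalized base if its $\Pi$-fission is complete. For an equivalence relation $e$ that is a relation of $\mathcal X$ and a class $\Delta$ of $e$, the restriction is $\mathcal X_\Delta=(\Delta,\{s\cap\Delta^2:s\in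 S\}\setminus\{\emptyset\})$, and the quotient $\mathcal X_{\Omega/e}$ is the coherent configuration on $\Omega/e$ with basic relations $\{(\Gamma,\Delta): s\cap(\Gamma\times\Delta)\ne\emptyset\}$, $s\in S$ (nonempty ones). The wreath product $\mathcal X_1\wr\mathcal X_2$ is the smallest coherent configuration $\mathcal X$ on $\Omega_1\times\Omega_2$ such that the equivalence relation $e$ with classes $\Omega_a=\Omega_1\times\{a\}$, $a\in\Omega_2$, is a relation of $\mathcal X$, each restriction $\mathcal X_{\Omega_a}$ is the image of $\mathcal X_1$ under $x\mapsto(x,a)$, and $\mathcal X_{\Omega/e}$ is the image of $\mathcal X_2$ under $a\mapsto\Omega_a$. *)

From mathcomp Require Import all_boot.
Set Implicit Arguments. Unset Strict Implicit. Unset Printing Implicit Defensive.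

(* A coherent configuration on a point set Om : {set T} (T a finType) is given
   by its set S of basic relations, a set of subsets of T * T. *)

Section CC.
Variable T : finType.

Definition diagS (G : {set T}) : {set T * T} :=
  [set p : T * T | (p.1 == p.2) && (p.1 \in G)].

Definition transp (s : {set T * T}) : {set T * T} :=
  [set p : T * T | (p.2, p.1) \in s].

Definition is_relation (S : {set {set T * T}}) (R : {set T * T}) : Prop :=
  exists2 S' : {set {set T * T}}, S' \subset S & R = cover S'.

Definition is_cc (Om : {set T}) (S : {set {set T * T}}) : Prop :=
  [/\ partition S (setX Om Om),
      is_relation S (diagS Om),
      (forall s, s \in S -> transp s \in S) &
      (forall r s t, r \in S -> s \in S -> t \in S ->
         forall x y x' y', (x, y) \in t -> (x', y') \in t ->
         #|[set g | ((x, g) \in r) && ((g, y) \in s)]| =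
         #|[set g | ((x', g) \in r) && ((g, y') \in s)]|)].

Definition is_fiber (S : {set {set T * T}}) (G : {set T}) : Prop :=
  diagS G \in S.

Definition union_of_fibers (S : {set {set T * T}}) (G : {set T}) : Prop :=
  exists2 F : {set {set T}}, (forall D, D \in F -> is_fiber S D) & G = cover F.

Definition fission (S S' : {set {set T * T}}) : Prop :=
  forall R, is_relation S R -> is_relation S' R.

Definition complete (S : {set {set T * T}}) : Prop :=
  forall s, s \in S -> #|s| = 1%N.

Definition Pi_fission_cond (Om : {set T}) (S : {set {set T * T}})
  (Pi : {set {set T}}) (S' : {set {set T * T}}) : Prop :=
  [/\ is_cc Om S', fission S S' & forall G, G \in Pi -> union_of_fibers S' G].

Definition is_Pi_fission (Om : {set T}) (S : {set {set T * T}})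
  (Pi : {set {set T}}) (S' : {set {set T * T}}) : Prop :=
  Pi_fission_cond Om S Pi S' /\
  (forall S'', Pi_fission_cond Om S Pi S'' -> fission S' S'').

Definition gen_base (Om : {set T}) (S : {set {set T * T}}) (Pi : {set {set T}})
  : Prop :=
  exists2 S', is_Pi_fission Om S Pi S' & complete S'.

Definition restr (S : {set {set T * T}}) (D : {set T}) : {set {set T * T}} :=
  [set s :&: setX D D | s in S] :\ set0.

Definition eclasses (Om : {set T}) (e : {set T * T}) : {set {set T}} :=
  [set [set y in Om | (x, y) \in e] | x in Om].

Definition quot (Om : {set T}) (S : {set {set T * T}}) (e : {set T * T})
  : {set {set {set T} * {set T}}} :=
  [set [set P : {set T} * {set T} |
          [&& P.1 \in eclasses Om e, P.2 \in eclasses Om e &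
              [exists x in P.1, exists y in P.2, (x, y) \in s]]] | s : {set T * T} in S]
  :\ set0.

End CC.

Section Wreath.
Variables T1 T2 : finType.

Definition wr_e : {set (T1 * T2) * (T1 * T2)} :=
  [set p | p.1.2 == p.2.2].

Definition Omega_a (a : T2) : {set T1 * T2} := [set x | x.2 == a].

Definition img1 (S1 : {set {set T1 * T1}}) (a : T2)
  : {set {set (T1 * T2) * (T1 * T2)}} :=
  [set [set ((p.1, a), (p.2, a)) | p in s] | s : {set T1 * T1} in S1].

Definition img2 (S2 : {set {set T2 * T2}})
  : {set {set {set T1 * T2} * {set T1 * T2}}} :=
  [set [set (Omega_a p.1, Omega_a p.2) | p in s] | s : {set T2 * T2} in S2].

Definition wreath_cond (S1 : {set {set T1 * T1}}) (S2 : {set {set T2 * T2}})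
  (S : {set {set (T1 * T2) * (T1 * T2)}}) : Prop :=
  [/\ is_cc [set: T1 * T2] S,
      is_relation S wr_e,
      (forall a, restr S (Omega_a a) = img1 S1 a) &
      quot [set: T1 * T2] S wr_e = img2 S2].

Definition is_wreath (S1 : {set {set T1 * T1}}) (S2 : {set {set T2 * T2}})
  (S : {set {set (T1 * T2) * (T1 * T2)}}) : Prop :=
  wreath_cond S1 S2 S /\
  (forall S', wreath_cond S1 S2 S' -> fission S S').

End Wreath.

From mathcomp Require Import all_boot.
Set Implicit Arguments. Unset Strict Implicit. Unset Printing Implicit Defensive.

(* A configuration satisfies the Pi-fission conditions exactly when it lies above
   the Pi-fission, so Pi is a generalized base iff every such configuration is
   complete.  Let X be one for the wreath product.  Restricted to a block
   Omega_a it satisfies the Pi_a-fission conditions of the block, and projected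
   to Omega_2 those of X_2 for the projected family; by hypothesis both are
   complete.  The basic relation of X through a diagonal pair (z, z) therefore
   projects to a point, lies in a single block, and is the singleton
   {(z, z)}.  A coherent configuration whose diagonal splits into singletons is
   complete, since the intersection numbers with these singletons pin down both
   coordinates of every pair of a basic relation. *)

Section Partition.
Variable U : finType.
Implicit Types (P : {set {set U}}) (D s t : {set U}).

Lemma partition_block_eq P D s t p :
  partition P D -> s \in P -> t \in P -> p \in s -> p \in t -> s = t.
Proof.
move/partition_trivIset=> tI sP tP ps pt.
by rewrite -(def_pblock tI sP ps) (def_pblock tI tP pt).
Qed.

Lemma partition_blockP P D p :
  partition P D -> p \in D -> exists2 s, s \in P & p \in s.
Proof. by move/cover_partition=> <- /bigcupP. Qed.

Lemma partition_block_sub P D s : partition P D -> s \in P -> s \subset D.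
Proof. by move/cover_partition=> <-; apply: bigcup_sup. Qed.

Lemma partition_block_mem P D s : partition P D -> s \in P -> exists p, p \in s.
Proof. by move=> hP /(partition_neq0 hP)/set0Pn. Qed.

End Partition.

Section Configuration.
Variable T : finType.
Implicit Types (Om G : {set T}) (Pi : {set {set T}}) (S X Q : {set {set T * T}}).
Implicit Types (R s : {set T * T}).

Lemma basic_relation S s : s \in S -> is_relation S s.
Proof. by move=> sS; exists [set s]; rewrite ?sub1set ?cover1. Qed.

Lemma saturated_relation S (D R : {set T * T}) :
  partition S D -> R \subset D ->
  (forall s, s \in S -> forall p, p \in s -> p \in R -> s \subset R) ->
  is_relation S R.
Proof.
move=> hP RD satR; exists [set s in S | s \subset R].
  by apply/subsetP => s; rewrite inE => /andP[].
apply/setP => p; apply/idP/bigcupP => [pR | [s]]; last first.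
  by rewrite inE => /andP[_ /subsetP]; apply.
have [s sS ps] := partition_blockP hP (subsetP RD _ pR).
by exists s; rewrite // inE sS (satR s sS p).
Qed.

Lemma relation_saturated S (D R : {set T * T}) s p :
  partition S D -> is_relation S R -> s \in S -> p \in s -> p \in R -> s \subset R.
Proof.
move=> hP [A AS ->] sS ps /bigcupP[u uA pu].
rewrite (partition_block_eq hP sS (subsetP AS _ uA) ps pu).
exact: bigcup_sup.
Qed.

Lemma relation_sub S (D R : {set T * T}) :
  partition S D -> is_relation S R -> R \subset D.
Proof.
move=> hP [A AS ->]; apply/bigcupsP => u uA.
exact: partition_block_sub hP (subsetP AS _ uA).
Qed.

Lemma card_setI_pred (V : finType) (a b : pred V) :
  #|[set g | a g && b g]| = \sum_g ((a g : nat) * (b g : nat)).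
Proof.
rewrite -sum1_card big_mkcond /=; apply: eq_bigr => g _; rewrite inE.
by case: (a g); case: (b g).
Qed.

Lemma mem_cover_sum (P A : {set {set T * T}}) D p :
  partition P D -> A \subset P ->
  (p \in cover A : nat) = \sum_(u in A) (p \in u : nat).
Proof.
move=> hP AP; have [/bigcupP[u0 uA pu0] | np] := boolP (p \in cover A).
  rewrite (bigD1 u0) //= pu0 big1 // => u /andP[uA' /negbTE neq].
  apply/eqP; rewrite eqb0; apply: contraFN neq => pu; apply/eqP.
  exact: partition_block_eq hP (subsetP AP _ uA') (subsetP AP _ uA) pu pu0.
rewrite big1 // => u uA; apply/eqP; rewrite eqb0; apply: contra np => pu.
by apply/bigcupP; exists u.
Qed.

(* Intersection numbers of relations are sums of those of basic relations. *)
Lemma relation_intersection_numbers Om S R1 R2 t x y x' y' :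
  is_cc Om S -> is_relation S R1 -> is_relation S R2 -> t \in S ->
  (x, y) \in t -> (x', y') \in t ->
  #|[set g | ((x, g) \in R1) && ((g, y) \in R2)]| =
  #|[set g | ((x', g) \in R1) && ((g, y') \in R2)]|.
Proof.
move=> [hP _ _ hc] [A1 A1S ->] [A2 A2S ->] tS xyt xyt'.
have sum_basic x0 y0 :
    #|[set g | ((x0, g) \in cover A1) && ((g, y0) \in cover A2)]| =
    \sum_(u in A1) \sum_(v in A2) #|[set g | ((x0, g) \in u) && ((g, y0) \in v)]|.
  rewrite card_setI_pred.
  under eq_bigr do rewrite (mem_cover_sum _ hP A1S) (mem_cover_sum _ hP A2S) big_distrlr.
  rewrite exchange_big; apply: eq_bigr => u _; rewrite exchange_big.
  by apply: eq_bigr => v _; rewrite card_setI_pred.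
rewrite !sum_basic; apply: eq_bigr => u uA; apply: eq_bigr => v vA.
exact: hc (subsetP A1S _ uA) (subsetP A2S _ vA) tS _ _ _ _ xyt xyt'.
Qed.

Definition relcomp R1 R2 : {set T * T} :=
  [set p | [exists g, ((p.1, g) \in R1) && ((g, p.2) \in R2)]].

Lemma relcomp_relation Om S R1 R2 :
  is_cc Om S -> is_relation S R1 -> is_relation S R2 ->
  is_relation S (relcomp R1 R2).
Proof.
move=> ccS h1 h2; have [hP _ _ _] := ccS.
apply: (saturated_relation hP).
  apply/subsetP => -[a b]; rewrite inE => /existsP[g /andP[ag gb]].
  move: (subsetP (relation_sub hP h1) _ ag) (subsetP (relation_sub hP h2) _ gb).
  by rewrite !inE /= => /andP[-> _] /andP[_ ->].
move=> s sS [x y] xys; rewrite inE /= => /existsP[g /andP[xg gy]].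
apply/subsetP => -[x' y'] xys'; rewrite inE /=.
have : 0 < #|[set g | ((x, g) \in R1) && ((g, y) \in R2)]|.
  by apply/card_gt0P; exists g; rewrite inE xg gy.
rewrite (relation_intersection_numbers ccS h1 h2 sS xys xys').
by case/card_gt0P => g'; rewrite inE => ?; apply/existsP; exists g'.
Qed.

Lemma complete_relation X (D R : {set T * T}) :
  partition X D -> complete X -> R \subset D -> is_relation X R.
Proof.
move=> hP cX RD; apply: (saturated_relation hP RD) => s sX p ps pR.
have /cards1P[q sE] : #|s| == 1 by rewrite cX.
by move: ps pR; rewrite sE inE => /eqP ->; rewrite sub1set.
Qed.

Lemma diagS_set1 (z : T) : diagS [set z] = [set (z, z)].
Proof.
apply/setP => -[u v]; rewrite !inE /= xpair_eqE.
by apply/andP/andP => [[/eqP -> ->] | [/eqP -> /eqP ->]].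
Qed.

Lemma complete_diag_basic Om X z :
  is_cc Om X -> complete X -> z \in Om -> diagS [set z] \in X.
Proof.
move=> [hP _ _ _] cX zOm.
have [b bX zzb] : exists2 b, b \in X & (z, z) \in b.
  by apply: partition_blockP hP _; rewrite !inE zOm.
have /cards1P[q bE] : #|b| == 1 by rewrite cX.
by move: zzb; rewrite diagS_set1 bE inE => /eqP ->; rewrite -bE.
Qed.

Lemma complete_union_of_fibers Om X G :
  is_cc Om X -> complete X -> G \subset Om -> union_of_fibers X G.
Proof.
move=> ccX cX GOm; exists [set [set z] | z in G].
  by move=> _ /imsetP[z zG ->]; apply: complete_diag_basic (subsetP GOm _ zG).
apply/setP => z; apply/idP/bigcupP => [zG | [_ /imsetP[u uG ->]]].
  by exists [set z]; rewrite ?imset_f ?set11.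
by rewrite inE => /eqP ->.
Qed.

Lemma complete_of_diag_basic Om X :
  is_cc Om X -> (forall z, z \in Om -> diagS [set z] \in X) -> complete X.
Proof.
move=> [hP _ _ hc] diagX s sX; have [[x y] xys] := partition_block_mem hP sX.
have /andP[xOm yOm] : (x \in Om) && (y \in Om).
  by have := subsetP (partition_block_sub hP sX) _ xys; rewrite inE.
have sxy : s \subset [set (x, y)].
  apply/subsetP => -[x' y'] xys'; rewrite inE.
  have hx := hc _ _ _ (diagX x xOm) sX sX _ _ _ _ xys xys'.
  have hy := hc _ _ _ sX (diagX y yOm) sX _ _ _ _ xys xys'.
  rewrite !diagS_set1 in hx hy.
  have : 0 < #|[set g | ((x, g) \in [set (x, x)]) && ((g, y) \in s)]|.
    by apply/card_gt0P; exists x; rewrite !inE eqxx.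
  rewrite hx => /card_gt0P[g]; rewrite !inE => /andP[/eqP[-> _] _].
  have : 0 < #|[set g | ((x, g) \in s) && ((g, y) \in [set (y, y)])]|.
    by apply/card_gt0P; exists y; rewrite !inE eqxx xys.
  by rewrite hy => /card_gt0P[g']; rewrite !inE => /andP[_ /eqP[_ ->]].
by rewrite (_ : s = [set (x, y)]) ?cards1 //; apply/eqP; rewrite eqEsubset sxy sub1set.
Qed.

Definition discrete Om : {set {set T * T}} := [set [set p] | p in setX Om Om].

Lemma discrete_complete Om : complete (discrete Om).
Proof. by move=> _ /imsetP[p _ ->]; rewrite cards1. Qed.

Lemma discrete_cc Om : is_cc Om (discrete Om).
Proof.
have hP : partition (discrete Om) (setX Om Om).
  apply/and3P; split.
  - apply/eqP/setP => p; apply/bigcupP/idP => [[_ /imsetP[q qOm ->]] | pOm].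
      by rewrite inE => /eqP ->.
    by exists [set p]; rewrite ?imset_f ?set11.
  - apply/trivIsetP => _ _ /imsetP[p _ ->] /imsetP[q _ ->] neq.
    by rewrite disjoints1 inE; apply: contra neq => /eqP ->.
  - by apply/imsetP => -[p _ /setP/(_ p)]; rewrite !inE eqxx.
split => //.
- apply: complete_relation hP (@discrete_complete Om) _.
  by apply/subsetP => -[u v]; rewrite !inE /= => /andP[/eqP -> ->].
- move=> _ /imsetP[[u v] uvOm ->]; apply/imsetP; exists (v, u).
    by move: uvOm; rewrite !inE andbC.
  by apply/setP => -[a b]; rewrite !inE !xpair_eqE andbC.
move=> r s _ _ _ /imsetP[[u v] _ ->] x y x' y'.
by rewrite !inE => /eqP[-> ->] /eqP[-> ->].
Qed.

Lemma gen_base_complete Om S Pi Q :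
  gen_base Om S Pi -> Pi_fission_cond Om S Pi Q -> complete Q.
Proof.
move=> [S' [[[hP' _ _ _] _ _] minS'] cS'] condQ; have [[hQ _ _ _] _ _] := condQ.
move=> q qQ; have [p pq] := partition_block_mem hQ qQ.
have [b bS' pb] := partition_blockP hP' (subsetP (partition_block_sub hQ qQ) _ pq).
have /cards1P[p0 bE] : #|b| == 1 by rewrite cS'.
move: pb; rewrite bE inE => /eqP pE; rewrite -{}pE in bE.
have /(minS' Q condQ) p_relQ : is_relation S' [set p] by rewrite -bE; apply: basic_relation.
have qp := relation_saturated hQ p_relQ qQ pq (set11 p).
by rewrite (_ : q = [set p]) ?cards1 //; apply/eqP; rewrite eqEsubset qp sub1set.
Qed.

(* Conversely, the discrete configuration is then the Pi-fission. *)
Lemma gen_base_of_complete Om S Pi :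
  is_cc Om S -> (forall G, G \in Pi -> G \subset Om) ->
  (forall Q, Pi_fission_cond Om S Pi Q -> complete Q) -> gen_base Om S Pi.
Proof.
move=> [hP _ _ _] PiOm completeQ.
have ccD := discrete_cc Om; have [hD _ _ _] := ccD.
exists (discrete Om); last exact: discrete_complete.
split; first split => //.
- by move=> R /(relation_sub hP) ROm; apply: complete_relation hD (@discrete_complete Om) ROm.
- by move=> G /PiOm; apply: complete_union_of_fibers ccD (@discrete_complete Om).
move=> Q condQ R /(relation_sub hD) ROm; have [[hQ _ _ _] _ _] := condQ.
exact: complete_relation hQ (completeQ Q condQ) ROm.
Qed.

End Configuration.

Section Restriction.
Variables (T : finType) (Om D : {set T}) (e : {set T * T}) (X : {set {set T * T}}).
Hypotheses (ccX : is_cc Om X) (eX : is_relation X e) (DOm : D \subset Om).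
Hypotheses (DDe : setX D D \subset e) (eD : forall u v, u \in D -> (u, v) \in e -> v \in D).

Let hP : partition X (setX Om Om). Proof. by case: ccX. Qed.

Lemma restr_block_sub s : s \in X -> s :&: setX D D != set0 -> s \subset e.
Proof.
move=> sX /set0Pn[p]; rewrite inE => /andP[ps pDD].
exact: relation_saturated hP eX sX ps (subsetP DDe _ pDD).
Qed.

Lemma restr_partition : partition (restr X D) (setX D D).
Proof.
apply/and3P; split.
- apply/eqP/setP => p; apply/bigcupP/idP => [[_ /setD1P[_ /imsetP[s _ ->]]] | pDD].
    by rewrite inE => /andP[].
  have pOm : p \in setX Om Om.
    by move: pDD; rewrite !inE => /andP[/(subsetP DOm) -> /(subsetP DOm) ->].
  have [s sX ps] := partition_blockP hP pOm.
  exists (s :&: setX D D); last by rewrite inE ps.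
  apply/setD1P; split; last exact: imset_f.
  by apply/set0Pn; exists p; rewrite inE ps.
- apply/trivIsetP => _ _ /setD1P[_ /imsetP[s1 s1X ->]] /setD1P[_ /imsetP[s2 s2X ->]] neq.
  rewrite -setI_eq0; apply/set0Pn => -[p]; rewrite !inE => /andP[/andP[p1 _] /andP[p2 _]].
  by move: neq; rewrite (partition_block_eq hP s1X s2X p1 p2) eqxx.
- by rewrite in_setD1 eqxx.
Qed.

Lemma restr_cc : is_cc D (restr X D).
Proof.
have [_ diagX transpX hc] := ccX; have hR := restr_partition.
split => //.
- apply: (saturated_relation hR).
    by apply/subsetP => -[x y]; rewrite !inE /= => /andP[/eqP -> ->].
  move=> _ /setD1P[_ /imsetP[s sX ->]] p; rewrite inE => /andP[ps pDD] pdiag.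
  have sdiag : s \subset diagS Om.
    apply: (relation_saturated hP diagX sX ps).
    by move: pdiag pDD; rewrite !inE => /andP[-> pD] /andP[/(subsetP DOm) -> _].
  apply/subsetP => r; rewrite !inE => /andP[/(subsetP sdiag)].
  by rewrite inE => /andP[-> _] /andP[-> _].
- move=> q /setD1P[neq /imsetP[s sX qE]]; subst q.
  have transpE : transp (s :&: setX D D) = transp s :&: setX D D.
    by apply/setP => -[x y]; rewrite !inE /= [(y \in D) && _]andbC.
  rewrite transpE; apply/setD1P; split; last exact/imset_f/transpX.
  case/set0Pn: neq => -[x y]; rewrite !inE /= => /andP[xys /andP[xD yD]].
  by apply/set0Pn; exists (y, x); rewrite !inE /= xys xD yD.
move=> r' s' t' /setD1P[rn /imsetP[r rX rE]] /setD1P[sn /imsetP[s sX sE]].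
move=> /setD1P[_ /imsetP[t tX tE]] x y x' y'; subst r' s' t'.
rewrite !inE /= => /andP[xyt /andP[xD yD]] /andP[xyt' /andP[xD' yD']].
have re := restr_block_sub rX rn.
have restrE u v : u \in D -> v \in D ->
    [set g | ((u, g) \in r :&: setX D D) && ((g, v) \in s :&: setX D D)] =
    [set g | ((u, g) \in r) && ((g, v) \in s)].
  move=> uD vD; apply/setP => g; rewrite !inE /= uD vD /= !andbT.
  have [ugr /=|//] := boolP ((u, g) \in r).
  by rewrite (eD uD (subsetP re _ ugr)) andbT.
rewrite !restrE //; exact: hc rX sX tX _ _ _ _ xyt xyt'.
Qed.

Lemma restr_union_of_fibers G :
  union_of_fibers X G -> union_of_fibers (restr X D) (G :&: D).
Proof.
move=> [F fibF ->]; exists [set B :&: D | B in F & B :&: D != set0].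
  move=> _ /imsetP[B /setIdP[BF neq] ->].
  rewrite /is_fiber in_setD1; apply/andP; split.
    case/set0Pn: neq => z zBD; apply/set0Pn; exists (z, z).
    by move: zBD; rewrite !inE eqxx => /andP[-> ->].
  apply/imsetP; exists (diagS B); first exact: fibF.
  apply/setP => -[x y]; rewrite !inE /=.
  by case: eqP => //= <-; rewrite andbb; case: (x \in B).
apply/setP => z; apply/idP/bigcupP => [| [_ /imsetP[B /setIdP[BF _] ->]]].
  rewrite inE => /andP[/bigcupP[B BF zB] zD]; exists (B :&: D); last by rewrite inE zB.
  by apply: imset_f; rewrite inE BF; apply/set0Pn; exists z; rewrite inE zB.
by rewrite !inE => /andP[zB ->]; rewrite andbT; apply/bigcupP; exists B.
Qed.

Lemma restr_Pi_fission_cond (S : {set {set T * T}}) (Pi : {set {set T}}) :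
  fission S X -> (forall G, G \in Pi -> union_of_fibers X G) ->
  Pi_fission_cond D (restr S D) [set G :&: D | G in Pi] (restr X D).
Proof.
move=> fisX fibX; have hR := restr_partition.
split; first exact: restr_cc.
- move=> _ [A AS ->]; apply: (saturated_relation hR).
    apply/bigcupsP => _ /(subsetP AS)/setD1P[_ /imsetP[v _ ->]].
    exact: subsetIr.
  move=> _ /setD1P[_ /imsetP[u uX ->]] p; rewrite inE => /andP[pu pDD].
  case/bigcupP=> w wA; have /setD1P[_ /imsetP[v vS wE]] := subsetP AS _ wA.
  subst w; rewrite inE => /andP[pv _].
  have uv := relation_saturated hP (fisX _ (basic_relation vS)) uX pu pv.
  apply/subsetP => r; rewrite inE => /andP[ru rDD]; apply/bigcupP.
  by exists (v :&: setX D D); rewrite // inE (subsetP uv _ ru).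
by move=> _ /imsetP[G GPi ->]; apply/restr_union_of_fibers/fibX.
Qed.

End Restriction.

Section Wreath.
Variables T1 T2 : finType.
Notation T := (T1 * T2)%type.
Notation Om a := (@Omega_a T1 T2 a).
Variable X : {set {set T * T}}.
Hypotheses (ccX : is_cc [set: T] X) (eX : is_relation X (@wr_e T1 T2)).

Let hP : partition X (setX [set: T] [set: T]). Proof. by case: ccX. Qed.

Definition proj_pair (p : T * T) : T2 * T2 := (p.1.2, p.2.2).
Definition proj_rel (s : {set T * T}) : {set T2 * T2} := proj_pair @: s.

(* The quotient of X by wr_e, the class Omega_a being identified with a. *)
Definition quot_conf : {set {set T2 * T2}} := proj_rel @: X.

Definition wr_hull (R : {set T * T}) := relcomp (relcomp (@wr_e T1 T2) R) (@wr_e T1 T2).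

Lemma mem_wr_hull R p : (p \in wr_hull R) = (proj_pair p \in proj_rel R).
Proof.
apply/idP/imsetP => [| [[g h] gh [e1 e2]]].
  rewrite inE => /existsP[h /andP[]]; rewrite inE => /existsP[g /andP[]].
  by rewrite !inE /= => /eqP e1 gh /eqP e2; exists (g, h); rewrite // /proj_pair e1 e2.
rewrite inE; apply/existsP; exists h; rewrite !inE /= e2 eqxx andbT.
by apply/existsP; exists g; rewrite !inE /= e1 eqxx gh.
Qed.

Lemma wr_hull_relation R : is_relation X R -> is_relation X (wr_hull R).
Proof. by move=> hR; do 2![apply: relcomp_relation ccX _ _ => //]. Qed.

Lemma proj_rel_sub s R q :
  s \in X -> is_relation X R -> q \in proj_rel s -> q \in proj_rel R ->
  proj_rel s \subset proj_rel R.
Proof.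
move=> sX hR /imsetP[r rs ->] rR.
have sH : s \subset wr_hull R.
  by apply: (relation_saturated hP (wr_hull_relation hR) sX rs); rewrite mem_wr_hull.
by apply/subsetP => _ /imsetP[r' r's ->]; rewrite -mem_wr_hull (subsetP sH).
Qed.

Lemma quot_partition (t1 : T1) : partition quot_conf (setX [set: T2] [set: T2]).
Proof.
apply/and3P; split.
- apply/eqP/setP => -[a b]; rewrite !inE; apply/bigcupP.
  have [s sX ps] : exists2 s, s \in X & ((t1, a), (t1, b)) \in s.
    by apply: partition_blockP hP _; rewrite !inE.
  by exists (proj_rel s); [apply: imset_f | apply/imsetP; exists ((t1, a), (t1, b))].
- apply/trivIsetP => _ _ /imsetP[s sX ->] /imsetP[s' s'X ->] neq.
  rewrite -setI_eq0; apply/set0Pn => -[q]; rewrite inE => /andP[q1 q2].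
  move: neq; rewrite eqEsubset (proj_rel_sub sX (basic_relation s'X) q1 q2).
  by rewrite (proj_rel_sub s'X (basic_relation sX) q2 q1).
- apply/imsetP => -[s sX /setP sE]; have [p ps] := partition_block_mem hP sX.
  by move: (sE (proj_pair p)); rewrite inE imset_f.
Qed.

Lemma proj_rel_transp s : transp (proj_rel s) = proj_rel (transp s).
Proof.
apply/setP => -[a b]; rewrite inE; apply/imsetP/imsetP => -[[x y]].
  by move=> xys [-> ->]; exists (y, x); rewrite ?inE.
by rewrite inE /= => yxs [-> ->]; exists (y, x).
Qed.

(* The hull of a basic relation counts each intersection number of the quotient #|T1| times. *)
Lemma quot_cc (t1 : T1) : is_cc [set: T2] quot_conf.
Proof.
have hQ := quot_partition t1; have [_ _ transpX hc] := ccX.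
split => //.
- apply: (saturated_relation hQ); first by apply/subsetP => -[a b]; rewrite !inE.
  move=> _ /imsetP[s sX ->] _ /imsetP[p ps ->]; rewrite !inE /= => /andP[/eqP pe _].
  have se : s \subset @wr_e T1 T2 by apply: (relation_saturated hP eX sX ps); rewrite inE pe.
  apply/subsetP => _ /imsetP[q qs ->]; move: (subsetP se _ qs).
  by rewrite !inE /= => /eqP ->; rewrite eqxx.
- move=> _ /imsetP[s sX ->]; rewrite proj_rel_transp; exact/imset_f/transpX.
move=> _ _ _ /imsetP[r rX ->] /imsetP[s sX ->] /imsetP[t tX ->] a b a' b'.
move=> /imsetP[[x y] xyt [-> ->]] /imsetP[[x' y'] xyt' [-> ->]].
have hullE (u v : T) :
    #|[set z | ((u, z) \in wr_hull r) && ((z, v) \in wr_hull s)]| =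
    #|T1| * #|[set g | ((u.2, g) \in proj_rel r) && ((g, v.2) \in proj_rel s)]|.
  rewrite -cardsT -cardsX; apply: eq_card => -[w c].
  by rewrite in_set !mem_wr_hull in_setX in_setT /= in_set.
have := relation_intersection_numbers ccX (wr_hull_relation (basic_relation rX))
  (wr_hull_relation (basic_relation sX)) tX xyt xyt'.
rewrite !hullE => /eqP; rewrite eqn_pmul2l; first by move/eqP.
by apply/card_gt0P; exists t1.
Qed.

Lemma proj_union_of_fibers G :
  union_of_fibers X G -> union_of_fibers quot_conf [set x.2 | x in G].
Proof.
move=> [F fibF ->]; exists [set [set x.2 | x in B] | B : {set T} in F].
  move=> _ /imsetP[B BF ->]; apply/imsetP; exists (diagS B); first exact: fibF.
  apply/setP => -[a b]; rewrite !inE /=; apply/andP/imsetP.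
    by case=> /eqP <- /imsetP[x xB ->]; exists (x, x); rewrite // !inE eqxx.
  by case=> -[x y]; rewrite !inE /= => /andP[/eqP <- xB] [-> ->]; rewrite imset_f.
apply/setP => a; apply/imsetP/bigcupP => [[x /bigcupP[B BF xB] ->] | ].
  by exists [set x.2 | x in B]; rewrite !imset_f.
case=> _ /imsetP[B BF ->] /imsetP[x xB ->]; exists x => //.
by apply/bigcupP; exists B.
Qed.

Section QuotientFission.
Variables (S2 : {set {set T2 * T2}}) (S : {set {set T * T}}) (Pi : {set {set T}}).
Hypotheses (fisX : fission S X) (fibX : forall G, G \in Pi -> union_of_fibers X G).
Hypothesis quotS : quot [set: T] S (@wr_e T1 T2) = @img2 T1 T2 S2.

Lemma wr_e_class (x : T) : [set y in [set: T] | (x, y) \in @wr_e T1 T2] = Om x.2.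
Proof. by apply/setP => y; rewrite !inE eq_sym. Qed.

Lemma quot_basic_proj s2 : s2 \in S2 -> exists2 s, s \in S & proj_rel s = s2.
Proof.
move=> s2S2; have : [set (Om p.1, Om p.2) | p in s2] \in @img2 T1 T2 S2 by apply: imset_f.
rewrite -quotS => /setD1P[_ /imsetP[s sS sE]]; exists s => //.
apply/setP => -[a b]; apply/imsetP/idP => [[[x y] xys [-> ->]] | abs2].
  have : (Om x.2, Om y.2) \in [set (Om p.1, Om p.2) | p in s2].
    rewrite sE inE /= /eclasses -!wr_e_class !imset_f ?in_setT //=.
    apply/existsP; exists x; rewrite wr_e_class !inE eqxx /=.
    by apply/existsP; exists y; rewrite !inE eqxx.
  case/imsetP => -[a' b'] abs2 /= [Ea Eb].
  have : x \in Om a' by rewrite -Ea inE.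
  have : y \in Om b' by rewrite -Eb inE.
  by rewrite !inE => /eqP -> /eqP ->.
have : (Om a, Om b) \in [set (Om p.1, Om p.2) | p in s2] by apply/imsetP; exists (a, b).
rewrite sE inE => /and3P[_ _ /existsP[x /andP[xa /existsP[y /andP[yb xys]]]]].
by exists (x, y) => //; move: xa yb; rewrite /proj_pair !inE /= => /eqP -> /eqP ->.
Qed.

Lemma quot_Pi_fission_cond (t1 : T1) :
  Pi_fission_cond [set: T2] S2 [set [set x.2 | x in G] | G : {set T} in Pi] quot_conf.
Proof.
have hQ := quot_partition t1.
split; first exact: quot_cc.
- move=> _ [A AS2 ->]; apply: (saturated_relation hQ).
    by apply/subsetP => -[a b]; rewrite !inE.
  move=> _ /imsetP[s sX ->] p ps /bigcupP[s2 s2A ps2].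
  have [s0 s0S s0E] := quot_basic_proj (subsetP AS2 _ s2A).
  have := proj_rel_sub sX (fisX (basic_relation s0S)) ps; rewrite s0E => /(_ ps2) ss2.
  by apply/subsetP => r /(subsetP ss2) rs2; apply/bigcupP; exists s2.
by move=> _ /imsetP[G GPi ->]; apply/proj_union_of_fibers/fibX.
Qed.

End QuotientFission.
End Wreath.

Lemma wreath_Pi_fission_complete (T1 T2 : finType) (S2 : {set {set T2 * T2}})
    (S X : {set {set (T1 * T2) * (T1 * T2)}}) (Pi : {set {set T1 * T2}}) :
  is_cc [set: T1 * T2] X -> is_relation X (@wr_e T1 T2) -> fission S X ->
  (forall G, G \in Pi -> union_of_fibers X G) ->
  quot [set: T1 * T2] S (@wr_e T1 T2) = @img2 T1 T2 S2 ->
  (forall a, gen_base (@Omega_a T1 T2 a) (restr S (@Omega_a T1 T2 a))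
                     [set G :&: @Omega_a T1 T2 a | G in Pi]) ->
  gen_base [set: T2] S2 [set [set x.2 | x in G] | G : {set T1 * T2} in Pi] ->
  complete X.
Proof.
move=> ccX eX fisX fibX quotS baseR baseQ; have [hP _ _ _] := ccX.
apply: (complete_of_diag_basic ccX) => z _; set Om := @Omega_a T1 T2 z.2.
have [d dX zzd] : exists2 d, d \in X & (z, z) \in d.
  by apply: partition_blockP hP _; rewrite !inE.
have dqE : proj_rel d = [set (z.2, z.2)].
  have /cards1P[q dqE] : #|proj_rel d| == 1.
    by rewrite (gen_base_complete baseQ (quot_Pi_fission_cond ccX eX fisX fibX quotS z.1))
      ?imset_f.
  have zzq : proj_pair (z, z) \in proj_rel d by apply: imset_f.
  by move: zzq; rewrite dqE inE => /eqP <-.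
have dW : d \subset setX Om Om.
  apply/subsetP => r rd; have : proj_pair r \in proj_rel d by apply: imset_f.
  by rewrite dqE inE => /eqP[r1 r2]; rewrite !inE r1 r2 eqxx.
have dR : d \in restr X Om.
  apply/setD1P; split; first by apply/set0Pn; exists (z, z).
  by apply/imsetP; exists d => //; apply/esym/setIidPl.
have DDe : setX Om Om \subset @wr_e T1 T2.
  by apply/subsetP => -[x y]; rewrite !inE /= => /andP[/eqP -> /eqP ->].
have eD u v : u \in Om -> (u, v) \in @wr_e T1 T2 -> v \in Om.
  by rewrite !inE /= => /eqP <- /eqP <-.
have condR := restr_Pi_fission_cond ccX eX (subsetT _) DDe eD fisX fibX.
have /cards1P[r drE] : #|d| == 1 by rewrite (gen_base_complete (baseR z.2) condR).
by move: zzd; rewrite diagS_set1 drE inE => /eqP ->; rewrite -drE.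
Qed.

Theorem lemma5p1 (T1 T2 : finType)
  (S1 : {set {set T1 * T1}}) (S2 : {set {set T2 * T2}})
  (S : {set {set (T1 * T2) * (T1 * T2)}}) (Pi : {set {set T1 * T2}}) :
  is_cc [set: T1] S1 -> is_cc [set: T2] S2 ->
  is_wreath S1 S2 S ->
  (forall a : T2, gen_base (@Omega_a T1 T2 a) (restr S (@Omega_a T1 T2 a))
                           [set G :&: @Omega_a T1 T2 a | G in Pi]) ->
  gen_base [set: T2] S2 [set [set x.2 | x in G] | G : {set T1 * T2} in Pi] ->
  gen_base [set: T1 * T2] S Pi.
Proof.
move=> _ _ [[ccS eS _ quotS] _] baseR baseQ.
apply: gen_base_of_complete ccS _ _ => [G _ | X [ccX fisX fibX]]; first exact: subsetT.
exact: wreath_Pi_fission_complete ccX (fisX _ eS) fisX fibX quotS baseR baseQ.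
Qed.
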